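(* Let $G$ be a finite, simple, undirected, connected graph with $n$ vertices. Then $\gamma_3(G)+\kappa(G)=2n-2$ if and only if $G$ is isomorphic to $K_4$, $C_4$ or $K_{1,2}$.
   Context: In a graph $G=(V,E)$, a vertex dominates itself and its neighbours. A set $S\subseteq V$ is a three dominating set of $G$ if every vertex in $V\setminus S$ is dominated by at least three vertices of $S$ (equivalently, every vertex of $V\setminus S$ has at least three neighbours in $S$). The three domination number $\gamma_3(G)$ is the minimum cardinality of a three dominating set of $G$. The connectivity $\kappa(G)$ of a connected graph $G$ is the minimum number of vertices whose removal results in a disconnected or trivial (one-vertex) graph; in particular $\kappa(K_n)=n-1$. $C_n$ denotes the cycle on $n$ vertices and $K_{m,n}$ the complete bipartite graph with parts of sizes $m$ and $n$. *)

(* A finite simple graph is a symmetric irreflexive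
   relation e : rel T on a finType T (vertex set = all of T). *)
From mathcomp Require Import all_boot all_order.
Set Implicit Arguments. Unset Strict Implicit. Unset Printing Implicit Defensive.

Section Graphs.
Variable T : finType.
Variable e : rel T.

Definition gconnected : Prop :=
  0 < #|T| /\ forall x y : T, connect e x y.

Definition del_rel (S : {set T}) : rel T :=
  [rel x y | [&& e x y, x \notin S & y \notin S]].

Definition disconnecting (S : {set T}) : bool :=
  (#|~: S| <= 1) ||
  [exists x, exists y, [&& x \notin S, y \notin S & ~~ connect (del_rel S) x y]].

Definition kappa : nat := \big[minn/#|T|]_(S : {set T} | disconnecting S) #|S|.

Definition three_dominating (S : {set T}) : bool :=
  [forall v, (v \notin S) ==> (3 <= #|[set u in S | e v u]|)].

Definition gamma3 : nat := \big[minn/#|T|]_(S : {set T} | three_dominating S) #|S|.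

End Graphs.

Definition gisomorphic (T U : finType) (e : rel T) (f : rel U) : Prop :=
  exists g : T -> U, bijective g /\ forall x y, e x y = f (g x) (g y).

Definition K4_rel : rel 'I_4 := fun x y => x != y.
Definition C4_rel : rel 'I_4 :=
  fun x y => (x.+1 %% 4 == y :> nat) || (y.+1 %% 4 == x :> nat).
Definition K12_rel : rel 'I_3 :=
  fun x y => (x != y) && ((x == 0 :> nat) || (y == 0 :> nat)).

From mathcomp Require Import all_boot all_order.
From mathcomp Require Import zify.
Set Implicit Arguments. Unset Strict Implicit. Unset Printing Implicit Defensive.
Import Order.TTheory.

(* Always gamma_3 <= n and kappa <= n - 1, and kappa <= n - 2 unless G is complete.
   For complete G the sum is (n - 1) + min(n, 3), which equals 2n - 2 only for n = 4.
   Otherwise gamma_3 = n and kappa = n - 2; but gamma_3 = n forces maximum degree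
   at most 2 (a vertex with three neighbours can be left out of V), while kappa is
   at most the minimum degree. Hence n <= 4 and every degree is n - 2 or more, which
   leaves the path K_{1,2} (n = 3) and the 2-regular C_4 (n = 4). *)

Lemma bigmin_leq (I : finType) (P : pred I) (F : I -> nat) m j :
  P j -> \big[minn/m]_(i | P i) F i <= F j.
Proof. by move=> Pj; rewrite -minEnat; exact: (bigmin_le_cond _ F Pj). Qed.

Lemma leq_bigmin (I : finType) (P : pred I) (F : I -> nat) m n :
  n <= m -> (forall i, P i -> n <= F i) -> n <= \big[minn/m]_(i | P i) F i.
Proof. by move=> nm nF; rewrite -minEnat; apply/(bigmin_geP m n P F). Qed.

Lemma mem_card_full (T : finType) (A : {pred T}) x : #|A| = #|T| -> x \in A.
Proof. by move=> AT; rewrite (subset_cardP AT (subset_predT A)). Qed.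

Lemma connect_no_succ (T : finType) (r : rel T) x y :
  (forall z, ~~ r x z) -> connect r x y -> x = y.
Proof. by move=> nr /connectP [[|z p] //= /andP [rxz _]]; case/negP: (nr z). Qed.

Definition nbrs (T : finType) (e : rel T) (v : T) : {set T} := [set u | e v u].

Definition complete (T : finType) (e : rel T) : Prop := forall x y, x != y -> e x y.

Section Transport.
Variables (T U : finType) (e : rel T) (f : rel U) (g : T -> U).
Hypotheses (g_bij : bijective g) (e_f : forall x y, e x y = f (g x) (g y)).

Lemma nbrs_gisomorphic x : nbrs f (g x) = g @: nbrs e x.
Proof.
apply/setP => u; have [h gh hg] := g_bij.
by rewrite -(hg u) (mem_imset _ _ (can_inj gh)) !inE e_f.
Qed.

Lemma card_nbrs_gisomorphic x : #|nbrs e x| = #|nbrs f (g x)|.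
Proof. by rewrite nbrs_gisomorphic card_imset //; apply: bij_inj. Qed.

Lemma card_nbrsI_gisomorphic x y :
  #|nbrs e x :&: nbrs e y| = #|nbrs f (g x) :&: nbrs f (g y)|.
Proof.
have g_inj := bij_inj g_bij.
by rewrite !nbrs_gisomorphic -imsetI ?card_imset // => ? ? _ _ /g_inj.
Qed.

End Transport.

Lemma C4_nbrs_le2 (i : 'I_4) : #|nbrs C4_rel i| <= 2.
Proof.
rewrite leqNgt; apply/card_gt2P => -[a [b [c [[]]]]]; rewrite !inE.
by move: i a b c; do 4!case=> [[|[|[|[|?]]]] ?]; move=> //= _ _ _ [].
Qed.

Lemma C4_common_nbrs (i j : 'I_4) :
  i != j -> ~~ C4_rel i j -> 1 < #|nbrs C4_rel i :&: nbrs C4_rel j|.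
Proof.
move: i j; do 2!case=> [[|[|[|[|?]]]] ?]; move=> //= _ _; apply/card_gt1P;
  first [ by exists (@Ordinal 4 1 isT), (@Ordinal 4 3 isT); rewrite !inE
        | by exists (@Ordinal 4 0 isT), (@Ordinal 4 2 isT); rewrite !inE ].
Qed.

Lemma K12_nbrs_leaf : nbrs K12_rel (@Ordinal 3 1 isT) = [set ord0].
Proof. by apply/setP; case=> [[|[|[|?]]] ?]; rewrite !inE. Qed.

Section Graph.
Variables (T : finType) (e : rel T).
Hypotheses (e_sym : symmetric e) (e_irr : irreflexive e).

Lemma edge_neq x y : e x y -> x != y.
Proof. by apply: contraTneq => ->; rewrite e_irr. Qed.

Lemma card_nbrs_le_pred v : #|nbrs e v| <= #|T|.-1.
Proof.
rewrite -(cardsC1 v); apply/subset_leq_card/subsetP => u.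
by rewrite !inE eq_sym; apply: edge_neq.
Qed.

Lemma gamma3_le_card S : three_dominating e S -> gamma3 e <= #|S|.
Proof. exact: bigmin_leq. Qed.

Lemma gamma3_le : gamma3 e <= #|T|.
Proof. by rewrite -cardsT gamma3_le_card //; apply/forallP => v; rewrite in_setT. Qed.

Lemma gamma3_ge : minn #|T| 3 <= gamma3 e.
Proof.
apply: leq_bigmin => [|S HS]; first exact: geq_minl.
have [v vS | S_full] := pickP [predC S].
  apply: leq_trans (geq_minr _ _) (leq_trans (implyP (forallP HS v) vS) _).
  by apply/subset_leq_card/subsetP => u; rewrite inE => /andP[].
apply: leq_trans (geq_minl _ _) _; rewrite -cardsT subset_leq_card //.
by apply/subsetP => v _; move/negbFE: (S_full v).
Qed.

Lemma gamma3_eq_card : gamma3 e = #|T| <-> forall v, #|nbrs e v| <= 2.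
Proof.
split=> [g_n v | deg_le2].
  rewrite leqNgt; apply/negP => deg_gt2.
  have n_gt0 : 0 < #|T| by apply/card_gt0P; exists v.
  suff : gamma3 e <= #|[set~ v]| by rewrite cardsC1 g_n; lia.
  apply: gamma3_le_card; apply/forallP => w; rewrite !inE negbK.
  apply/implyP => /eqP ->; apply: leq_trans deg_gt2 (subset_leq_card _).
  by apply/subsetP => u; rewrite !inE => evu; rewrite evu eq_sym edge_neq.
apply/eqP; rewrite eqn_leq gamma3_le; apply: leq_bigmin => // S HS.
suff -> : S = setT by rewrite cardsT.
apply/setP => v; rewrite inE; apply/contraT => vS.
have := implyP (forallP HS v) vS; have := deg_le2 v.
have : #|[set u in S | e v u]| <= #|nbrs e v|.
  by apply/subset_leq_card/subsetP => u; rewrite !inE => /andP[].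
lia.
Qed.

Lemma gamma3_complete : complete e -> 2 < #|T| -> gamma3 e <= 3.
Proof.
move=> e_compl; rewrite -cardsT => /card_gt2P [a [b [c [_ [ab bc ca]]]]].
have card_abc : #|[set a; b; c]| = 3.
  by rewrite setUC cardsU1 cards2 !inE ab negb_or ca (eq_sym c) bc.
rewrite -card_abc; apply: gamma3_le_card; apply/forallP => w.
apply/implyP => wS; rewrite -{1}card_abc subset_leq_card //.
apply/subsetP => u uS; rewrite inE uS e_compl //.
by apply: contraNneq wS => ->.
Qed.

Lemma kappa_le_card S : disconnecting e S -> kappa e <= #|S|.
Proof. exact: bigmin_leq. Qed.

Lemma kappa_le_pred : 0 < #|T| -> kappa e <= #|T|.-1.
Proof.
move=> /card_gt0P [v _]; rewrite -(cardsC1 v); apply: kappa_le_card.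
by rewrite /disconnecting setCK cards1.
Qed.

Lemma kappa_gt0 : gconnected e -> 1 < #|T| -> 0 < kappa e.
Proof.
move=> [_ e_conn] n_gt1; apply: leq_bigmin => [|S]; first exact: ltnW.
apply: contraTT; rewrite -leqNgt leqn0 => /eqP/cards0_eq ->.
rewrite /disconnecting setC0 cardsT leqNgt n_gt1 /= negb_exists.
apply/forallP => x; rewrite negb_exists; apply/forallP => y.
rewrite (@eq_connect _ _ e) ?e_conn ?andbF // => u w.
by rewrite /del_rel /= !in_set0 andbT.
Qed.

Lemma kappa_le_nbrs v : kappa e <= #|nbrs e v|.
Proof.
apply: kappa_le_card; apply/orP.
have [small|many] := leqP #|~: nbrs e v| 1; [by left | right].
have vS : v \notin nbrs e v by rewrite inE e_irr.
have /card_gt0P [w] : 0 < #|~: nbrs e v :\ v| by rewrite (cardsD1 v) inE vS in many.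
rewrite !inE => /andP [wv wS].
apply/existsP; exists v; apply/existsP; exists w.
have v_isolated z : ~~ del_rel e (nbrs e v) v z.
  by rewrite /del_rel /= !inE; case: (e v z); rewrite ?andbF.
rewrite vS inE wS /=; apply: contra wv => /(connect_no_succ v_isolated) ->.
exact: eqxx.
Qed.

Lemma kappa_le_nonadj x y : x != y -> ~~ e x y -> kappa e <= #|T| - 2.
Proof.
move=> xy nxy.
have <- : #|~: [set x; y]| = #|T| - 2.
  by have := cardsC [set x; y]; rewrite cards2 xy; lia.
apply: kappa_le_card; apply/orP; right; apply/existsP; exists x; apply/existsP; exists y.
have x_isolated z : ~~ del_rel e (~: [set x; y]) x z.
  rewrite /del_rel /= !inE !negbK; apply/negP => /and3P [exz _ /orP [] /eqP zE].
  - by move: exz; rewrite zE e_irr.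
  - by move: exz; rewrite zE (negbTE nxy).
rewrite !inE !eqxx orbT /=; apply: contra xy => /(connect_no_succ x_isolated) ->.
exact: eqxx.
Qed.

Lemma kappa_complete : complete e -> #|T|.-1 <= kappa e.
Proof.
move=> e_compl; apply: leq_bigmin => [|S]; first exact: leq_pred.
case/orP => [S_small | /existsP [x /existsP [y /and3P [xS yS]]]].
  by have := cardsC S; lia.
have [-> | xy] := eqVneq x y; first by rewrite connect0.
by rewrite (connect1 (_ : del_rel e S x y)) // /del_rel /= e_compl ?xS.
Qed.

Lemma kappa_gt1 : 2 < #|T| ->
  (forall x y, x != y -> ~~ e x y -> 1 < #|nbrs e x :&: nbrs e y|) -> 1 < kappa e.
Proof.
move=> n_gt2 common; apply: leq_bigmin => [|S]; first exact: ltnW.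
rewrite /disconnecting ltnNge; apply: contraL => S_le1; rewrite negb_or.
have -> /= : (#|~: S| <= 1) = false by have := cardsC S; lia.
rewrite negb_exists; apply/forallP => x; rewrite negb_exists; apply/forallP => y.
apply/negP => /and3P [xS yS /negP]; apply.
have [-> | xy] := eqVneq x y; first by rewrite connect0.
have [exy | nxy] := boolP (e x y); first by apply: connect1; rewrite /del_rel /= exy xS.
have [z] : exists2 z, z \in nbrs e x :&: nbrs e y & z \notin S.
  apply/exists_inP; rewrite -negb_forall_in; apply/negP => /forall_inP sub.
  have /subset_leq_card : nbrs e x :&: nbrs e y \subset S by apply/subsetP.
  by have := common x y xy nxy; lia.
rewrite !inE => /andP [exz ezy] zS.
by apply: (connect_trans (y := z)); apply: connect1;
  rewrite /del_rel /= ?exz ?xS ?zS // e_sym ezy.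
Qed.

Lemma gisomorphic_of_inj k (R : rel 'I_k) (h : 'I_k -> T) :
  injective h -> #|T| = k -> (forall i j, e (h i) (h j) = R i j) -> gisomorphic e R.
Proof.
move=> h_inj n_k eR.
have [g hg gh] : bijective h by apply: inj_card_bij; rewrite // card_ord n_k.
by exists g; split=> [|x y]; [exists h | rewrite -{1}(gh x) -{1}(gh y) eR].
Qed.

Lemma gisomorphic_K4 : #|T| = 4 -> complete e -> gisomorphic e K4_rel.
Proof.
move=> n4 e_compl; pose h i := enum_val (cast_ord (esym n4) i).
have h_inj : injective h by move=> i j /enum_val_inj /cast_ord_inj.
apply: (gisomorphic_of_inj h_inj n4) => i j; rewrite /K4_rel.
have [-> | ij] := eqVneq i j; first exact: e_irr.
by rewrite e_compl // (inj_eq h_inj).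
Qed.

Lemma gisomorphic_K12 (z x y : T) : #|T| = 3 -> uniq [:: z; x; y] ->
  e z x -> e z y -> ~~ e x y -> gisomorphic e K12_rel.
Proof.
move=> n3 /tuple_uniqP h_inj ezx ezy /negbTE nxy.
apply: (gisomorphic_of_inj h_inj n3).
by do 2!case=> [[|[|[|?]]] ?] //; rewrite /= ?e_irr ?ezx ?ezy ?nxy // e_sym ?ezx ?ezy ?nxy.
Qed.

Lemma gisomorphic_C4 (x a y b : T) : #|T| = 4 -> uniq [:: x; a; y; b] ->
  e x a -> e a y -> e y b -> e b x -> ~~ e x y -> ~~ e a b -> gisomorphic e C4_rel.
Proof.
move=> n4 /tuple_uniqP h_inj exa eay eyb ebx /negbTE nxy /negbTE nab.
apply: (gisomorphic_of_inj h_inj n4).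
by do 2!case=> [[|[|[|[|?]]]] ?] //;
  rewrite /= ?e_irr ?exa ?eay ?eyb ?ebx ?nxy ?nab // e_sym ?exa ?eay ?eyb ?ebx ?nxy ?nab.
Qed.

Lemma gisomorphic_K12_of_nbrs x y : #|T| = 3 -> x != y -> ~~ e x y ->
  (forall v, 0 < #|nbrs e v|) -> gisomorphic e K12_rel.
Proof.
move=> n3 xy nxy nbrs_gt0.
have /card_gt0P [z] := nbrs_gt0 x; rewrite inE => exz.
have zy : z != y by apply: contraNneq nxy => <-.
have zxy : uniq [:: z; x; y].
  by rewrite /= !inE negb_or (eq_sym z) (edge_neq exz) zy xy.
have /card_gt0P [w] := nbrs_gt0 y; rewrite inE => eyw.
have : w \in [:: z; x; y] by apply: mem_card_full; rewrite (card_uniqP zxy).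
rewrite !inE => /or3P [] /eqP wE; move: eyw; rewrite wE => eyw.
- by apply: (gisomorphic_K12 n3 zxy) => //; rewrite e_sym.
- by rewrite e_sym eyw in nxy.
- by rewrite e_irr in eyw.
Qed.

Lemma gisomorphic_C4_of_nbrs : #|T| = 4 -> (forall v, #|nbrs e v| = 2) ->
  gisomorphic e C4_rel.
Proof.
move=> n4 deg2; have /card_gt0P [x _] : 0 < #|T| by rewrite n4.
have /cards2P [a [b [ab Nx]]] : #|nbrs e x| == 2 by rewrite deg2.
have ex u : e x u = (u \in [set a; b]) by rewrite -Nx inE.
have /card_gt0P [y] : 0 < #|~: nbrs e x :\ x|.
  by have := cardsC (nbrs e x); rewrite deg2 n4 (cardsD1 x) !inE e_irr; lia.
rewrite !inE => /andP [yx nxy].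
(* y is the vertex opposite x on the 4-cycle. *)
have [exa exb] : e x a /\ e x b by rewrite !ex !inE !eqxx orbT.
have [ya yb] : y != a /\ y != b by move: nxy; rewrite ex !inE negb_or => /andP.
have xaby : uniq [:: x; a; y; b].
  by rewrite /= !inE !negb_or (edge_neq exa) (edge_neq exb) !(eq_sym _ y) yx ya ab yb.
have all_in u : u \in [:: x; a; y; b] by apply: mem_card_full; rewrite (card_uniqP xaby).
have ey v : e y v = (v \in [set a; b]).
  suff -> : [set a; b] = nbrs e y by rewrite inE.
  apply/eqP; rewrite eq_sym eqEcard cards2 ab deg2 leqnn andbT.
  apply/subsetP => u; rewrite inE => eyu; move: (all_in u) eyu.
  rewrite !inE => /or4P [] /eqP ->; rewrite ?eqxx ?orbT // ?e_irr //.
  by rewrite e_sym (negbTE nxy).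
have [eya eyb] : e y a /\ e y b by rewrite !ey !inE !eqxx orbT.
have nab : ~~ e a b.
  have Na : nbrs e a = [set x; y].
    apply/eqP; rewrite eq_sym eqEcard cards2 (eq_sym x) yx deg2 leqnn andbT.
    by apply/subsetP => u; rewrite !inE => /orP [] /eqP ->; rewrite e_sym.
  move/setP: Na => /(_ b); rewrite !inE => ->.
  by rewrite negb_or !(eq_sym b) (edge_neq exb) yb.
by apply: (gisomorphic_C4 n4 xaby exa _ eyb _ nxy nab); rewrite e_sym.
Qed.

Lemma complete_gamma3_kappa : 0 < #|T| -> complete e ->
  gamma3 e + kappa e = 2 * #|T| - 2 -> #|T| = 4.
Proof.
move=> n_gt0 e_compl sum_eq.
have := gamma3_ge; have := gamma3_le; have := kappa_complete e_compl.
have := kappa_le_pred n_gt0; have [n_gt2 | ] := ltnP 2 #|T|; last lia.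
by have := gamma3_complete e_compl n_gt2; lia.
Qed.

Lemma noncomplete_gamma3_kappa x y : gconnected e -> x != y -> ~~ e x y ->
  gamma3 e + kappa e = 2 * #|T| - 2 -> gisomorphic e C4_rel \/ gisomorphic e K12_rel.
Proof.
move=> e_conn xy nxy sum_eq.
have n_gt1 : 1 < #|T| by apply/card_gt1P; exists x, y.
have k_gt0 := kappa_gt0 e_conn n_gt1.
have k_le := kappa_le_nonadj xy nxy.
have g_n : gamma3 e = #|T| by have := gamma3_le; lia.
have deg_le2 := gamma3_eq_card.1 g_n.
have deg_ge v : #|T| - 2 <= #|nbrs e v| by have := kappa_le_nbrs v; lia.
have [n3 | n4] : #|T| = 3 \/ #|T| = 4 by have := deg_le2 x; have := deg_ge x; lia.
- right; apply: (gisomorphic_K12_of_nbrs n3 xy nxy) => v.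
  by have := deg_ge v; rewrite n3.
- left; apply: (gisomorphic_C4_of_nbrs n4) => v.
  by have := deg_ge v; have := deg_le2 v; rewrite n4; lia.
Qed.

Lemma gisomorphic_of_gamma3_kappa : gconnected e ->
  gamma3 e + kappa e = 2 * #|T| - 2 ->
  [\/ gisomorphic e K4_rel, gisomorphic e C4_rel | gisomorphic e K12_rel].
Proof.
move=> e_conn sum_eq.
have [/existsP [x /existsP [y /andP [xy nxy]]] | all_adj] :=
  boolP [exists x, exists y, (x != y) && ~~ e x y].
  by case: (noncomplete_gamma3_kappa e_conn xy nxy sum_eq); [apply: Or32 | apply: Or33].
have e_compl : complete e.
  move=> x y xy; apply/contraT => nxy; case/negP: all_adj.
  by apply/existsP; exists x; apply/existsP; exists y; rewrite xy.
apply: Or31; apply: gisomorphic_K4 => //.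
exact: complete_gamma3_kappa e_conn.1 e_compl sum_eq.
Qed.

Lemma gamma3_kappa_K4 : gisomorphic e K4_rel -> gamma3 e + kappa e = 2 * #|T| - 2.
Proof.
case=> g [g_bij e_g].
have n4 : #|T| = 4 by rewrite (bij_eq_card g_bij) card_ord.
have e_compl : complete e by move=> x y xy; rewrite e_g /K4_rel (bij_eq g_bij).
have := gamma3_ge; have := gamma3_complete e_compl; have := kappa_le_pred.
have := kappa_complete e_compl; rewrite n4 => ? /(_ isT) ? /(_ isT) ? ?; lia.
Qed.

Lemma gamma3_kappa_C4 : gisomorphic e C4_rel -> gamma3 e + kappa e = 2 * #|T| - 2.
Proof.
case=> g [g_bij e_g].
have n4 : #|T| = 4 by rewrite (bij_eq_card g_bij) card_ord.
have deg_le2 v : #|nbrs e v| <= 2.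
  by rewrite (card_nbrs_gisomorphic g_bij e_g) C4_nbrs_le2.
have k_gt1 : 1 < kappa e.
  apply: kappa_gt1 => [|x y xy nxy]; first by rewrite n4.
  by rewrite (card_nbrsI_gisomorphic g_bij e_g) C4_common_nbrs ?(bij_eq g_bij) // -e_g.
have /card_gt0P [v _] : 0 < #|T| by rewrite n4.
have := kappa_le_nbrs v; have := deg_le2 v; have := gamma3_eq_card.2 deg_le2.
by rewrite n4; lia.
Qed.

Lemma gamma3_kappa_K12 : gconnected e -> gisomorphic e K12_rel ->
  gamma3 e + kappa e = 2 * #|T| - 2.
Proof.
move=> e_conn [g [g_bij e_g]].
have n3 : #|T| = 3 by rewrite (bij_eq_card g_bij) card_ord.
have deg_le2 v : #|nbrs e v| <= 2 by have := card_nbrs_le_pred v; rewrite n3.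
have [h _ hg] := g_bij; set leaf := h (@Ordinal 3 1 isT).
have deg_leaf : #|nbrs e leaf| = 1.
  by rewrite (card_nbrs_gisomorphic g_bij e_g) hg K12_nbrs_leaf cards1.
have := kappa_le_nbrs leaf; have := kappa_gt0 e_conn; have := gamma3_eq_card.2 deg_le2.
by rewrite deg_leaf n3 => ? /(_ isT); lia.
Qed.

End Graph.

Theorem theorem3p2 (T : finType) (e : rel T)
  (e_sym : symmetric e) (e_irr : irreflexive e) (e_conn : gconnected e) :
  gamma3 e + kappa e = 2 * #|T| - 2 <->
  [\/ gisomorphic e K4_rel, gisomorphic e C4_rel | gisomorphic e K12_rel].
Proof.
split; first exact: gisomorphic_of_gamma3_kappa.
by case; [apply: gamma3_kappa_K4 | apply: gamma3_kappa_C4 | apply: gamma3_kappa_K12].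
Qed.
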